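(* Let $n\ge2$, let $L_1,\dots,L_n$ be finite lists of reals, each sorted in nondecreasing order, and fix $0\le\tau_{min}\le\tau_{max}$. Let $\|D\|=\sum_{i=1}^n |L_i|$ be the total size of the data. Then Algorithm-Chain runs in $O(\|D\|)$ time.
   Context: A tuple of indices $(p_1,\dots,p_n)$, with values $x_i=L_i[p_i]$, is valid if $x_{i+1}-x_i\in[\tau_{min},\tau_{max}]$ for $i=1,\dots,n-1$. The same algorithm and bound apply to ordered siblings, with $[-\delta,\delta]$ in place of $[\tau_{min},\tau_{max}]$. Algorithm-Chain, which computes a maximum matching (a largest sequence of valid tuples whose indices strictly increase in every list), is implemented as follows: 1. Keep pointers $P_1,\dots,P_n$, initially at the first entries, and a current pair index $i$, initially $1$. Let $x_k=L_k[P_k]$. 2. While every pointer lies within its list, do one of the following: - If $x_{i+1}-x_i<\tau_{min}$, advance $P_{i+1}$. - Else if $x_{i+1}-x_i\in[\tau_{min},\tau_{max}]$: if $i+1=n$, record $(P_1,\dots,P_n)$ as the next matched tuple, advance every pointer by one, and set $i\gets1$; otherwise set $i\gets i+1$. - Else ($x_{i+1}-x_i>\tau_{max}$), advance $P_i$ and set $i\gets\max(i-1,1)$. Arithmetic operations, comparisons and pointer moves cost unit time. *)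

(* Indices are 0-based: lists L_1..L_n
   are (nth [::] L 0) .. (nth [::] L (n-1)), the pair index i ranges over
   0 .. n-2 (pair (i, i+1)). *)
From mathcomp Require Import all_boot all_order all_algebra.
Set Implicit Arguments. Unset Strict Implicit. Unset Printing Implicit Defensive.
Import Order.TTheory GRing.Theory Num.Theory.
Local Open Scope ring_scope.

Record chain_state := ChainState {
  cs_ptr : seq nat;
  cs_idx : nat;
  cs_out : seq (seq nat) }.

Section Chain.
Variable R : realDomainType.
Variables (L : seq (seq R)) (tmin tmax : R).

Definition chain_inbounds (P : seq nat) : bool :=
  all (fun k => (nth 0%N P k < size (nth [::] L k))%N) (iota 0 (size L)).

Definition chain_incr (k : nat) (P : seq nat) : seq nat :=
  set_nth 0%N P k (nth 0%N P k).+1.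

Definition chain_val (P : seq nat) (k : nat) : R :=
  nth 0 (nth [::] L k) (nth 0%N P k).

(* None = loop condition false (halt).
   Some (s', c): new state and cost c of this iteration, counted as one
   unit for the comparisons/arithmetic plus one unit per pointer move
   (1 move in the advance cases, n moves when all pointers are advanced;
   recording the n-tuple is charged to those n moves as well). *)
Definition chain_step (s : chain_state) : option (chain_state * nat) :=
  let P := cs_ptr s in
  let i := cs_idx s in
  if ~~ chain_inbounds P then None else
  let d := chain_val P i.+1 - chain_val P i in
  if d < tmin then
    Some (ChainState (chain_incr i.+1 P) i (cs_out s), 2%N)
  else if d <= tmax then
    (if i.+2 == size L then
       Some (ChainState (map S P) 0 (rcons (cs_out s) P), (1 + size L)%N)
     else Some (ChainState P i.+1 (cs_out s), 1%N))
  else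
    Some (ChainState (chain_incr i P) i.-1 (cs_out s), 2%N).

Fixpoint chain_run (fuel : nat) (s : chain_state) : option chain_state * nat :=
  match fuel with
  | 0 => (None, 0%N)
  | f.+1 =>
    match chain_step s with
    | None => (Some s, 0%N)
    | Some (s', c) => let r := chain_run f s' in (r.1, (c + r.2)%N)
    end
  end.

Definition chain_init : chain_state := ChainState (nseq (size L) 0%N) 0 [::].

End Chain.

Definition data_size (R : Type) (L : seq (seq R)) : nat := sumn (map size L).

(* Every iteration of the loop either advances a pointer or increments the pair
   index i, and a decrement of i always comes with a pointer advance.  Hence the
   potential 5 (P_1 + ... + P_n) + 2 i pays for each iteration, including the
   n pointer moves of a recorded tuple.  While the loop runs the pointers stay
   within their lists and i <= n - 2, so the potential never exceeds
   5 ||D|| + 2 (n - 2) <= 7 ||D||; the last step uses that every list is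
   nonempty, since otherwise the loop stops at once.  Neither the sortedness of
   the lists nor the thresholds play any role in the running time. *)
From mathcomp Require Import all_boot all_order all_algebra.
From mathcomp Require Import zify.
Import Order.TTheory GRing.Theory Num.Theory.
Set Implicit Arguments. Unset Strict Implicit.
Local Open Scope ring_scope.

Lemma leq_sumn_nth (s t : seq nat) : size s = size t ->
  (forall k, (k < size t)%N -> (nth 0 s k <= nth 0 t k)%N) ->
  (sumn s <= sumn t)%N.
Proof.
elim: t s => [|y t IH] [|x s] //= [size_st] le_st.
rewrite leq_add //; first exact: (le_st 0%N).
by apply: IH => // k lt_kt; apply: (le_st k.+1).
Qed.

Lemma sumn_chain_incr (P : seq nat) k : sumn (chain_incr k P) = (sumn P).+1.
Proof. by rewrite sumn_set_nth0 addnS subSn ?leq_addl // addnK. Qed.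

Lemma sumn_map_succ (P : seq nat) : sumn (map S P) = (sumn P + size P)%N.
Proof. by elim: P => //= x P ->; rewrite addnS addSn addnA. Qed.

Section ChainComplexity.
Variable R : realDomainType.
Variables (L : seq (seq R)) (tmin tmax : R).

Definition chain_ptr_ok (P : seq nat) : Prop :=
  size P = size L /\
  forall k, (k < size L)%N -> (nth 0%N P k <= size (nth [::] L k))%N.

Definition chain_wf (s : chain_state) : Prop :=
  chain_ptr_ok (cs_ptr s) /\ ((cs_idx s).+1 < size L)%N.

(* The weight 5 per pointer move covers the cost n + 1 of recording a tuple
   together with the loss of up to 2 (n - 2) when i is reset to the first pair. *)
Definition chain_potential (s : chain_state) : nat :=
  (5 * sumn (cs_ptr s) + 2 * cs_idx s)%N.

Definition chain_budget : nat := (5 * data_size L + 2 * (size L).-2)%N.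

Lemma chain_inboundsP P k : chain_inbounds L P -> (k < size L)%N ->
  (nth 0%N P k < size (nth [::] L k))%N.
Proof. by move=> /allP inb lt_kL; apply: inb; rewrite mem_iota. Qed.

Lemma chain_ptr_ok_sumn P : chain_ptr_ok P -> (sumn P <= data_size L)%N.
Proof.
case=> size_P le_P; apply: leq_sumn_nth; first by rewrite size_map.
by move=> k; rewrite size_map => lt_kL; rewrite (nth_map [::]) //; apply: le_P.
Qed.

Lemma chain_potential_le_budget s : chain_wf s -> (chain_potential s <= chain_budget)%N.
Proof. by case=> /chain_ptr_ok_sumn; rewrite /chain_potential /chain_budget; lia. Qed.

Lemma chain_ptr_ok_incr P k : chain_ptr_ok P -> chain_inbounds L P ->
  (k < size L)%N -> chain_ptr_ok (chain_incr k P).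
Proof.
move=> [size_P _] inb lt_kL; split; first by rewrite size_set_nth size_P maxnE; lia.
move=> j lt_jL; rewrite nth_set_nth /=.
by case: eqP => [->|_]; [apply: chain_inboundsP | apply: ltnW; apply: chain_inboundsP].
Qed.

Lemma chain_ptr_ok_succ P : chain_ptr_ok P -> chain_inbounds L P -> chain_ptr_ok (map S P).
Proof.
move=> [size_P _] inb; split; first by rewrite size_map.
by move=> k lt_kL; rewrite (nth_map 0%N) ?size_P //; apply: chain_inboundsP.
Qed.

(* The extra unit per iteration also pays for the fuel consumed, so the loop
   cannot run out of fuel when given the budget plus one. *)
Lemma chain_step_amortized s s' c : chain_wf s ->
  chain_step L tmin tmax s = Some (s', c) ->
  chain_wf s' /\ (c + 1 + chain_potential s <= chain_potential s')%N.
Proof.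
case: s => P i o [/= ok_P lt_iL]; rewrite /chain_step /chain_potential /=.
case: ifPn => // /negPn inb; case: ifP => _.
  case=> <- <-; split; first by split=> //; apply: chain_ptr_ok_incr ok_P inb lt_iL.
  by rewrite /= sumn_chain_incr; lia.
case: ifP => _; last first.
  case=> <- <-; split; first by split=> /=; [apply: chain_ptr_ok_incr ok_P inb (ltnW lt_iL) | lia].
  by rewrite /= sumn_chain_incr; lia.
case: ifP => /eqP last_pair [<- <-]; split.
- by split; [apply: chain_ptr_ok_succ | rewrite /=; lia].
- by rewrite /= sumn_map_succ ok_P.1; lia.
- by split=> //=; lia.
- by rewrite /=; lia.
Qed.

Lemma chain_run_amortized f s : chain_wf s ->
  ((chain_run L tmin tmax f s).2 + chain_potential s +
   (if (chain_run L tmin tmax f s).1 is None then f else 0) <= chain_budget)%N.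
Proof.
elim: f s => [|f IH] s wf_s /=; first by rewrite addn0; apply: chain_potential_le_budget.
case step_s: (chain_step L tmin tmax s) => [[s' c]|] /=; last first.
  by rewrite addn0; apply: chain_potential_le_budget.
have [wf_s' pays] := chain_step_amortized wf_s step_s.
have := IH s' wf_s'; case: (chain_run L tmin tmax f s').1 => [_|]; lia.
Qed.

Lemma chain_run_halts s : chain_wf s ->
  isSome (chain_run L tmin tmax chain_budget.+1 s).1 /\
  ((chain_run L tmin tmax chain_budget.+1 s).2 <= chain_budget)%N.
Proof.
move=> /(chain_run_amortized chain_budget.+1).
by case: (chain_run L tmin tmax chain_budget.+1 s).1 => [_|] /=; lia.
Qed.

Lemma chain_init_wf : (2 <= size L)%N -> chain_wf (chain_init L).
Proof.
move=> n_ge2; split=> //=; split; first by rewrite size_nseq.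
by move=> k lt_kL; rewrite nth_nseq lt_kL.
Qed.

Lemma size_le_data_size : chain_inbounds L (nseq (size L) 0%N) ->
  (size L <= data_size L)%N.
Proof.
move=> inb; rewrite -[X in (X <= _)%N]mul1n -sumn_nseq.
apply: leq_sumn_nth; first by rewrite size_nseq size_map.
move=> k; rewrite size_map => lt_kL; rewrite nth_nseq lt_kL (nth_map [::]) //.
by have := chain_inboundsP inb lt_kL; rewrite nth_nseq lt_kL.
Qed.

End ChainComplexity.

Theorem mainTheorem3 :
  exists C : nat,
  forall (R : realDomainType) (L : seq (seq R)) (tmin tmax : R),
    (2 <= size L)%N ->
    all (sorted <=%R) L ->
    0 <= tmin -> tmin <= tmax ->
    exists fuel : nat,
      isSome (chain_run L tmin tmax fuel (chain_init L)).1 /\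
      ((chain_run L tmin tmax fuel (chain_init L)).2 <= C * data_size L)%N.
Proof.
exists 7%N => R L tmin tmax n_ge2 _ _ _.
case inb: (chain_inbounds L (nseq (size L) 0%N)); last first.
  by exists 1%N; rewrite /= /chain_step inb.
exists (chain_budget L).+1.
have [halts cost] := chain_run_halts tmin tmax (chain_init_wf n_ge2).
split=> //; apply: leq_trans cost _.
by have := size_le_data_size inb; rewrite /chain_budget; lia.
Qed.
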